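(* Let $n,k\in\mathbb{N}$ with $n\ge 2k$. A function $f\colon\binom{[n]}{k}\to\mathbb{R}$ satisfies $W^k(f)=0$ if and only if there exists $h\colon\binom{[n]}{k-1}\to\mathbb{R}$ such that for all $R\in\binom{[n]}{k}$, $f(R)=\sum_{S\subset R,\,|S|=k-1}h(S)$.
   Context: An $s$-permutation of $V$ is a sequence of $s$ distinct elements of $V$. For $k,r\in\mathbb{N}$, a finite set $V$ with $|V|\ge 2k\ge 2r$ and $f\colon\binom{V}{k}\to\mathbb{R}$, the level-$r$ weight of $f$ is \[ W^r(f)=\left(\mathbb{E}_{(a_1,b_1,\ldots,a_r,b_r)}\Big(\mathbb{E}_{R}\,(-1)^{|R\cap\{b_1,\ldots,b_r\}|}f(R)\Big)^2\right)^{1/2}, \] where $(a_1,b_1,\ldots,a_r,b_r)$ is a uniformly random $2r$-permutation of $V$, and, given it, $R$ is a uniformly random $k$-subset of $V$ with $|R\cap\{a_i,b_i\}|=1$ for each $i\in[r]$. Here $V=[n]$ and $r=k$. *)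

From HB Require Import structures.
From mathcomp Require Import all_boot all_order all_algebra.
From mathcomp Require Export reals.
Set Implicit Arguments. Unset Strict Implicit. Unset Printing Implicit Defensive.
Import Order.TTheory GRing.Theory Num.Theory.
Local Open Scope ring_scope.

Definition avg (R : realType) (T : finType) (A : {set T}) (F : T -> R) : R :=
  (#|A|%:R)^-1 * \sum_(x in A) F x.

(* 2r-permutations (a_1,b_1,...,a_r,b_r) of 'I_n, encoded as p i = (a_i, b_i),
   with all 2r entries distinct. *)
Definition perm2 (n r : nat) : {set {ffun 'I_r -> 'I_n * 'I_n}} :=
  [set p : {ffun 'I_r -> 'I_n * 'I_n} |
     uniq (flatten [seq [:: (p i).1; (p i).2] | i <- enum 'I_r])].

Definition admissible (n r k : nat) (p : {ffun 'I_r -> 'I_n * 'I_n}) :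
  {set {set 'I_n}} :=
  [set S : {set 'I_n} | (#|S| == k) &&
     [forall i : 'I_r, #|S :&: [set (p i).1; (p i).2]| == 1%N]].

Definition bset (n r : nat) (p : {ffun 'I_r -> 'I_n * 'I_n}) : {set 'I_n} :=
  [set (p i).2 | i : 'I_r].

(* Level-r weight W^r(f) of f : binom([n], k) -> R (values of f off k-sets are irrelevant). *)
Definition weight (R : realType) (n k r : nat) (f : {set 'I_n} -> R) : R :=
  Num.sqrt (avg (perm2 n r) (fun p =>
    (avg (admissible k p) (fun S => (-1) ^+ #|S :&: bset p| * f S)) ^+ 2)).

(* Write chi_p for S |-> [S admissible for p] (-1)^|S ∩ {b_1,...,b_k}|, so that W^k(f) = 0
   iff f is orthogonal to every chi_p.  Each chi_p is orthogonal to the image of the up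
   operator h |-> (R |-> sum_{S ⊂ R, |S| = k-1} h S): a (k-1)-set below an admissible set
   misses exactly one pair {a_i, b_i}, and its two admissible extensions carry opposite signs.
   Conversely the chi_p and the up-image span all functions on k-sets.  This is shown for the
   functions S |-> [|S| = k] [A ⊆ S] prod_{(x,y) in s} ([x ∈ S] - [y ∈ S]), where s lists
   disjoint pairs avoiding A and |s| + |A| = k, by induction on |A|: they are the chi_p when
   A = ∅, and for q ∈ A the up operator applied to the analogous function of level k-1 for
   A - q is the function for A plus those for A - q + y, each of which differs from the
   function for A by the function for (q, y) :: s.  Hence a function orthogonal to all chi_p
   differs from an element of the up-image by a combination of the chi_p that is orthogonal
   to itself, i.e. by zero. *)

From HB Require Import structures.
From mathcomp Require Import all_boot all_order all_algebra.
From mathcomp Require Import reals.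
Import Order.TTheory GRing.Theory Num.Theory.
Local Open Scope ring_scope.
Set Implicit Arguments. Unset Strict Implicit. Unset Printing Implicit Defensive.

Lemma disjoint_setU1 (T : finType) (s : seq T) x (A : {set T}) :
  [disjoint s & x |: A] = (x \notin s) && [disjoint s & A].
Proof.
rewrite disjoint_sym (disjoint_sym _ A) -disjointU1.
by apply: eq_disjoint => z; rewrite !inE.
Qed.

Lemma subset_card_eq (T : finType) (A B : {set T}) :
  #|A| = #|B| -> (A \subset B) = (A == B).
Proof. by move=> AB; rewrite eqEcard AB leqnn andbT. Qed.

Lemma setU1D1 (T : finType) (x a : T) (A : {set T}) :
  a != x -> (x |: A) :\ a = x |: (A :\ a).
Proof.
by move=> ax; apply/setP => z; rewrite !inE; case: eqP => // ->; rewrite (negbTE ax).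
Qed.

Lemma big_subsets_setD1 (T : finType) (M : nmodType) d (S : {set T})
    (F : {set T} -> M) : #|S| = d.+1 ->
  \sum_(X : {set T} | (X \subset S) && (#|X| == d)) F X = \sum_(z in S) F (S :\ z).
Proof.
move=> cS; have injD1 : {in S &, injective (fun z => S :\ z)}.
  move=> z z' zS _ /setP/(_ z); rewrite !inE eqxx zS /= andbT.
  by move/esym/negbFE/eqP.
rewrite -(big_imset F injD1).
apply: eq_bigl => X; apply/andP/imsetP => [[sXS /eqP cX]|[z zS ->]].
  have /cards1P[z Dz] : #|S :\: X| == 1%N by rewrite cardsDS // cS cX subSnn.
  exists z; first by have := set11 z; rewrite -Dz inE => /andP[].
  by rewrite -Dz setDDr setDv set0U (setIidPr sXS).
by move: cS; rewrite (cardsD1 z) zS add1n => -[<-]; rewrite subD1set eqxx.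
Qed.

Lemma sum_eq_indicator (T : finType) (M : nzSemiRingType) (P : pred T) (Y : T) :
  \sum_(X | P X) ((X == Y)%:R : M) = (P Y)%:R.
Proof.
rewrite big_mkcond (bigD1 Y) //= eqxx big1 ?addr0 => [|X /negbTE->]; last by rewrite if_same.
by case: (P Y).
Qed.

Lemma card_setI2 (T : finType) (S : {set T}) x y : x != y ->
  #|S :&: [set x; y]| = ((x \in S) + (y \in S))%N.
Proof.
move=> xy; rewrite (cardsD1 x) (cardsD1 y) !inE !eqxx orbT [y == x]eq_sym xy /= !andbT.
rewrite (_ : _ :\ x :\ y = set0) ?cards0 ?addn0 //.
by apply/setP => z; rewrite !inE; case: (z =P y); case: (z =P x); rewrite ?andbF.
Qed.

Lemma avg_eq0 (R : realType) (T : finType) (A : {set T}) (F : T -> R) :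
  (avg A F == 0) = (\sum_(x in A) F x == 0).
Proof.
rewrite /avg mulf_eq0 invr_eq0 pnatr_eq0 cards_eq0.
by case: (eqVneq A set0) => [->|]; rewrite ?big_set0 ?eqxx.
Qed.

Lemma weight_eq0P (R : realType) n k r (f : {set 'I_n} -> R) :
  weight k r f = 0 <-> {in perm2 n r, forall p,
    \sum_(S in admissible k p) (-1) ^+ #|S :&: bset p| * f S = 0}.
Proof.
pose G (p : {ffun 'I_r -> 'I_n * 'I_n}) :=
  avg (admissible k p) (fun S => (-1) ^+ #|S :&: bset p| * f S).
have G_ge0 : 0 <= avg (perm2 n r) (fun p => G p ^+ 2).
  by rewrite mulr_ge0 ?invr_ge0 ?sumr_ge0 // => p _; apply: sqr_ge0.
rewrite /weight; split => [/eqP | perp_f].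
  rewrite sqrtr_eq0 -(andbT (_ <= 0)) -G_ge0 -eq_le avg_eq0 psumr_eq0 => [/allP perp_f p pP|p _].
    by move: (perp_f p (mem_index_enum p)); rewrite pP sqrf_eq0 avg_eq0 => /eqP.
  exact: sqr_ge0.
by rewrite /avg big1 ?mulr0 ?sqrtr0 // => p pP; rewrite /G /avg perp_f // mulr0 expr2 mulr0.
Qed.

Section Levels.
Variables (R : realType) (n : nat).
Implicit Types (A S T : {set 'I_n}) (g h : {set 'I_n} -> R) (s : seq ('I_n * 'I_n)).

Definition up d h S : R := \sum_(T : {set 'I_n} | (T \subset S) && (#|T| == d)) h T.
Definition down d g T : R := \sum_(S : {set 'I_n} | (T \subset S) && (#|S| == d)) g S.

Lemma upB d g h S : up d (fun T => g T - h T) S = up d g S - up d h S.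
Proof. exact: sumrB. Qed.

Lemma downB d g h T : down d (fun S => g S - h S) T = down d g T - down d h T.
Proof. exact: sumrB. Qed.

Lemma sum_mul_up d e g h : (forall S, #|S| != e -> g S = 0) ->
  \sum_S g S * up d h S = \sum_(T : {set 'I_n} | #|T| == d) h T * down e g T.
Proof.
move=> g0; under eq_bigr do rewrite mulr_sumr.
rewrite (exchange_big_dep (fun T => #|T| == d)) /=; last by move=> S T _ /andP[].
apply: eq_bigr => T dT; rewrite mulr_sumr big_mkcond [RHS]big_mkcond.
apply: eq_bigr => S _; rewrite dT andbT mulrC.
by case: (T \subset S); case: (eqVneq #|S| e) => [|/g0->]; rewrite ?mulr0.
Qed.

Definition pair_elems s : seq 'I_n := flatten [seq [:: x.1; x.2] | x <- s].

Lemma pair_elems_cons x y s : pair_elems ((x, y) :: s) = [:: x, y & pair_elems s].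
Proof. by []. Qed.

Lemma mem_unzip2_pair_elems s : {subset unzip2 s <= pair_elems s}.
Proof.
elim: s => [|[x y] s IH] //= z; rewrite pair_elems_cons !inE.
by case/orP=> [->|/IH->]; rewrite !orbT.
Qed.

Fixpoint chi d s A S : R :=
  if s is (x, y) :: s' then chi d s' (x |: A) S - chi d s' (y |: A) S
  else ((#|S| == d) && (A \subset S))%:R.

Lemma chi_card d s A S : #|S| != d -> chi d s A S = 0.
Proof.
by move=> cS; elim: s A => [|[x y] s IH] A /=; rewrite ?(negbTE cS) ?IH ?subrr.
Qed.

Lemma chiE d s A S : uniq (pair_elems s) ->
  chi d s A S =
  if [&& #|S| == d, all (fun x => #|S :&: [set x.1; x.2]| == 1%N) s & A \subset S]
  then (-1) ^+ #|S :&: [set z in unzip2 s]| else 0.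
Proof.
elim: s A => [|[x y] s IH] A; rewrite ?pair_elems_cons /=.
  rewrite (_ : [set z in [::]] = set0) ?setI0 ?cards0; last by apply/setP => z; rewrite !inE.
  by case: (_ == d); case: (A \subset S).
rewrite !inE negb_or => /and3P[/andP[xy _] ys Us].
have yU : y \notin unzip2 s by apply: contra ys; apply: mem_unzip2_pair_elems.
have -> : #|S :&: [set z in y :: unzip2 s]| = ((y \in S) + #|S :&: [set z in unzip2 s]|)%N.
  rewrite (cardsD1 y) !inE eqxx andbT; congr (_ + _)%N; apply: eq_card => z.
  by rewrite !inE; case: eqP => // ->; rewrite (negbTE yU) andbF.
rewrite !IH // card_setI2 // !subUset !sub1set.
case: (x \in S); case: (y \in S); rewrite /= ?andbF ?subrr ?subr0 ?sub0r //.
by case: ifP; rewrite ?exprS ?mulN1r ?oppr0.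
Qed.

Lemma up_chi d s A S : uniq (pair_elems s) -> [disjoint pair_elems s & A] ->
  #|S| = d.+1 ->
  up d (chi d s A) S = \sum_(z | (z \notin pair_elems s) && (z \notin A)) chi d.+1 s (z |: A) S.
Proof.
move=> + + cS; elim: s A => [|[x y] s IH] A; rewrite ?pair_elems_cons /=.
  move=> _ _; rewrite /up (big_subsets_setD1 _ cS) big_mkcond [RHS]big_mkcond /=.
  apply: eq_bigr => z _; rewrite cS eqxx subUset sub1set subsetD1.
  case zS: (z \in S); case: (z \in A); rewrite ?andbF //=.
  by move: cS; rewrite (cardsD1 z) zS add1n => -[->]; rewrite eqxx andbT.
rewrite !inE !negb_or !disjoint_cons => /and3P[/andP[xy xs] ys Us] /and3P[xA yA dA].
rewrite upB !IH ?disjoint_setU1 ?xs ?ys //.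
rewrite (bigD1 y) 1?[X in _ - X](bigD1 x); first last.
- by rewrite ys !inE negb_or yA eq_sym xy.
- by rewrite xs !inE negb_or xA xy.
rewrite (setUCA [set y]) opprD addrACA subrr add0r sumrB.
congr (_ - _); apply: eq_big => [z|z _]; rewrite ?(setUCA [set z]) // !inE !negb_or;
  by case: (z \in pair_elems s); case: (z == x); case: (z == y); case: (z \in A).
Qed.

Lemma down_chi d s A T : uniq (pair_elems s) -> [disjoint pair_elems s & A] ->
  (size s + #|A|)%N = d.+1 -> #|T| = d ->
  down d.+1 (chi d.+1 s A) T = \sum_(a in A) chi d s (A :\ a) T.
Proof.
move=> + + + cT; elim: s A => [|[x y] s IH] A; rewrite ?pair_elems_cons /=.
  rewrite add0n => _ _ cA; transitivity ((T \subset A)%:R : R).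
    rewrite /down (eq_bigr (fun S => (S == A)%:R)) => [|S /andP[_ /eqP cS]].
      by rewrite sum_eq_indicator cA eqxx andbT.
    by rewrite cS eqxx subset_card_eq ?cS // eq_sym.
  rewrite -(big_subsets_setD1 (fun X => ((#|T| == d) && (X \subset T))%:R) cA).
  rewrite (eq_bigr (fun X => (X == T)%:R)) => [|X /andP[_ /eqP cX]].
    by rewrite sum_eq_indicator cT eqxx andbT.
  by rewrite cT eqxx subset_card_eq ?cX.
rewrite !inE !negb_or !disjoint_cons => /and3P[/andP[xy xs] ys Us] /and3P[xA yA dA].
rewrite addSn => -[cA].
have cU z : z \notin A -> (size s + #|z |: A|)%N = d.+1 by move=> zA; rewrite cardsU1 zA addnCA cA.
rewrite downB !IH ?disjoint_setU1 ?xs ?ys ?cU // !big_setU1 //= !setU1K //.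
rewrite opprD addrACA subrr add0r -sumrB; apply: eq_bigr => a aA.
by rewrite !setU1D1 //; [apply: contraNneq yA | apply: contraNneq xA] => <-.
Qed.

Definition pairs_of r (p : {ffun 'I_r -> 'I_n * 'I_n}) := [seq p i | i <- enum 'I_r].

Lemma perm2E r p : (p \in perm2 n r) = uniq (pair_elems (pairs_of p)).
Proof. by rewrite inE /pair_elems /pairs_of -map_comp. Qed.

Lemma sum_admissible k r p (F : {set 'I_n} -> R) : p \in perm2 n r ->
  \sum_(S in admissible k p) (-1) ^+ #|S :&: bset p| * F S =
  \sum_S chi k (pairs_of p) set0 S * F S.
Proof.
rewrite perm2E => Up; rewrite big_mkcond; apply: eq_bigr => S _.
rewrite chiE // sub0set andbT inE.
have -> : [set z in unzip2 (pairs_of p)] = bset p.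
  apply/setP => z; rewrite inE; apply/mapP/imsetP => [[_ /mapP[i _ ->] ->]|[i _ ->]].
    by exists i.
  by exists (p i) => //; apply: map_f; rewrite mem_enum.
have -> : all (fun x => #|S :&: [set x.1; x.2]| == 1%N) (pairs_of p) =
          [forall i, #|S :&: [set (p i).1; (p i).2]| == 1%N].
  rewrite all_map; apply/allP/forallP => [H i | H i _]; last exact: H.
  by apply: H; rewrite mem_enum.
by case: ifP; rewrite ?mul0r.
Qed.

Section Span.
Variable k : nat.

Definition in_span g : Prop :=
  exists h, exists c : {ffun 'I_k -> 'I_n * 'I_n} -> R, forall S, #|S| = k ->
    g S = up k.-1 h S + \sum_(p in perm2 n k) c p * chi k (pairs_of p) set0 S.

Lemma in_span_ext g g' : in_span g -> (forall S, #|S| = k -> g' S = g S) -> in_span g'.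
Proof. by move=> [h [c gE]] E; exists h, c => S cS; rewrite E // gE. Qed.

Lemma in_span0 : in_span (fun _ => 0).
Proof.
exists (fun _ => 0), (fun _ => 0) => S _.
by rewrite /up !big1 ?addr0 // => p _; rewrite mul0r.
Qed.

Lemma in_spanD g1 g2 : in_span g1 -> in_span g2 -> in_span (fun S => g1 S + g2 S).
Proof.
move=> [h1 [c1 E1]] [h2 [c2 E2]].
exists (fun T => h1 T + h2 T), (fun p => c1 p + c2 p) => S cS.
rewrite E1 // E2 // /up !big_split /=.
under [X in _ = _ + X]eq_bigr => p _ do rewrite mulrDl.
by rewrite big_split /= addrACA.
Qed.

Lemma in_spanZ a g : in_span g -> in_span (fun S => a * g S).
Proof.
move=> [h [c E]]; exists (fun T => a * h T), (fun p => a * c p) => S cS.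
rewrite E // mulrDr /up !mulr_sumr.
by congr (_ + _); apply: eq_bigr => p _; rewrite mulrA.
Qed.

Lemma in_span_sum (I : finType) (Q : pred I) (F : I -> {set 'I_n} -> R) :
  (forall i, Q i -> in_span (F i)) -> in_span (fun S => \sum_(i | Q i) F i S).
Proof.
move=> spanF; suff: forall r, in_span (fun S => \sum_(i <- r | Q i) F i S) by apply.
elim=> [|i r IH]; first by apply: (in_span_ext in_span0) => S _; rewrite big_nil.
case Qi: (Q i).
  by apply: (in_span_ext (in_spanD (spanF i Qi) IH)) => S _; rewrite big_cons Qi.
by apply: (in_span_ext IH) => S _; rewrite big_cons Qi.
Qed.

Lemma in_span_up h : in_span (up k.-1 h).
Proof.
exists h, (fun _ => 0) => S _.
by rewrite big1 ?addr0 // => p _; rewrite mul0r.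
Qed.

Lemma in_span_perm2 p : p \in perm2 n k -> in_span (chi k (pairs_of p) set0).
Proof.
move=> pP; exists (fun _ => 0), (fun q => (q == p)%:R) => S _.
rewrite /up big1 ?add0r // (bigD1 p) //= eqxx mul1r big1 ?addr0 //.
by move=> q /andP[_ /negbTE->]; rewrite mul0r.
Qed.

Lemma perm2_of_pairs s : uniq (pair_elems s) -> size s = k ->
  exists2 p, p \in perm2 n k & pairs_of p = s.
Proof.
move=> Us /eqP sz; pose p := [ffun i => tnth (Tuple sz) i].
have Ep : pairs_of p = s by rewrite /pairs_of (eq_map (ffunE _)) map_tnth_enum.
by exists p; rewrite ?perm2E Ep.
Qed.

Lemma chi_in_span s A : uniq (pair_elems s) -> [disjoint pair_elems s & A] ->
  (size s + #|A|)%N = k -> in_span (chi k s A).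
Proof.
move: {2}#|A| (erefl #|A|) => m; elim: m s A => [|m IH] s A cA Us dA cK.
  rewrite (cards0_eq cA); rewrite cA addn0 in cK.
  by have [p pP <-] := perm2_of_pairs Us cK; apply: in_span_perm2.
have [q qA] : exists q, q \in A by apply/set0Pn; rewrite -card_gt0 cA.
set A0 := A :\ q; set Y := [set z | (z \notin pair_elems s) && (z \notin A)].
have cA0 : #|A0| = m by move: cA; rewrite (cardsD1 q) qA add1n => -[].
have qs : q \notin pair_elems s by rewrite (disjointFl dA qA).
have dA0 : [disjoint pair_elems s & A0] by apply: disjointWr dA; apply: subD1set.
have k_gt0 : (0 < k)%N by rewrite -cK cA addnS.
have upE S : #|S| = k ->
    up k.-1 (chi k.-1 s A0) S = chi k s A S + \sum_(y in Y) chi k s (y |: A0) S.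
  move=> cS; rewrite up_chi ?prednK // (bigD1 q) /=; last by rewrite qs setD11.
  rewrite setD1K //; congr (_ + _); apply: eq_bigl => z; rewrite !inE.
  by case: (z =P q) => [->|]; rewrite ?qA ?andbF ?andbT.
have spanY y : y \in Y -> in_span (chi k ((q, y) :: s) A0).
  rewrite inE => /andP[ys yA]; have qy : q != y by apply: contraNneq yA => <-.
  apply: IH; rewrite ?pair_elems_cons ?disjoint_cons //=.
  - by rewrite !inE negb_or qy qs ys.
  - by rewrite /A0 !inE eqxx /= (negbTE yA) andbF.
  - by rewrite cA0 addSn -addnS -cA.
apply: (in_span_ext (in_spanZ #|Y|.+1%:R^-1
  (in_spanD (in_span_up (chi k.-1 s A0)) (in_span_sum spanY)))) => S cS.
rewrite (eq_bigr (fun y => chi k s A S - chi k s (y |: A0) S)) => [|y _]; last first.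
  by rewrite /= setD1K.
rewrite upE // sumrB sumr_const addrACA subrr addr0 -mulrS.
by rewrite -[chi k s A S *+ _]mulr_natl mulKf ?pnatr_eq0.
Qed.

Lemma in_span_all g : in_span g.
Proof.
have spanA A : #|A| == k -> in_span (fun S => g A * chi k [::] A S).
  by move=> /eqP cA; apply/in_spanZ/chi_in_span; rewrite ?cA //; apply: eq_disjoint0.
apply: (in_span_ext (in_span_sum spanA)) => S cS.
rewrite (bigD1 S) ?cS //= big1 => [|A /andP[/eqP cA AS]].
  by rewrite cS eqxx subxx mulr1 addr0.
by rewrite cS eqxx subset_card_eq ?cA ?cS // (negbTE AS) mulr0.
Qed.

Lemma chi_perm2_orthogonal_up p h : (0 < k)%N -> p \in perm2 n k ->
  \sum_S chi k (pairs_of p) set0 S * up k.-1 h S = 0.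
Proof.
move=> k_gt0 pP; rewrite (@sum_mul_up k.-1 k) => [|S]; last exact: chi_card.
apply: big1 => T /eqP cT.
have := @down_chi k.-1 (pairs_of p) set0 T; rewrite prednK // big_set0 => -> //.
- by rewrite mulr0.
- by rewrite -perm2E.
- by rewrite disjoint_sym; apply: eq_disjoint0 => z; rewrite inE.
- by rewrite size_map size_enum_ord cards0 addn0.
Qed.

Lemma up_image_of_orthogonal f : (0 < k)%N ->
    (forall p, p \in perm2 n k -> \sum_S chi k (pairs_of p) set0 S * f S = 0) ->
  exists h, forall S, #|S| = k -> f S = up k.-1 h S.
Proof.
move=> k_gt0 perp_f; have [h [c fE]] := in_span_all f.
pose g S := \sum_(p in perm2 n k) c p * chi k (pairs_of p) set0 S.
suff g0 X : g X = 0 by exists h => S cS; rewrite fE // -/(g S) g0 addr0.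
have perp_g F : (forall p, p \in perm2 n k -> \sum_S chi k (pairs_of p) set0 S * F S = 0) ->
    \sum_S g S * F S = 0.
  move=> perp_F; under eq_bigr do rewrite mulr_suml; rewrite exchange_big big1 // => p pP.
  by under eq_bigr do rewrite -mulrA; rewrite -mulr_sumr perp_F ?mulr0.
have : \sum_S g S ^+ 2 = 0.
  transitivity (\sum_S g S * (f S - up k.-1 h S)).
    apply: eq_bigr => S _; case: (eqVneq #|S| k) => [cS|cS].
      by rewrite fE // addrAC subrr add0r expr2.
    by rewrite /g big1 ?expr2 ?mul0r // => p _; rewrite chi_card ?mulr0.
  under eq_bigr do rewrite mulrBr.
  by rewrite sumrB !perp_g ?subrr // => p pP; apply: chi_perm2_orthogonal_up.
by move/(psumr_eq0P (fun S _ => sqr_ge0 (g S)))/(_ X isT)/eqP; rewrite sqrf_eq0 => /eqP.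
Qed.

End Span.
End Levels.

Unset Implicit Arguments.

Theorem lemma2p7 (R : realType) (n k : nat) (hk : (0 < k)%N) (hn : (2 * k <= n)%N)
  (f : {set 'I_n} -> R) :
  weight k k f = 0 <->
  exists h : {set 'I_n} -> R, forall S : {set 'I_n}, #|S| = k ->
    f S = \sum_(T : {set 'I_n} | (T \subset S) && (#|T| == k.-1)) h T.
Proof.
split=> [/weight_eq0P perp_f | [h fE]].
  by apply: up_image_of_orthogonal => // p pP; rewrite -sum_admissible ?perp_f.
apply/weight_eq0P => p pP; rewrite sum_admissible //.
apply: etrans (chi_perm2_orthogonal_up h hk pP); apply: eq_bigr => S _.
by case: (eqVneq #|S| k) => [/fE->|/chi_card->]; rewrite ?mul0r.
Qed.
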